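(* For every positive integer $n$ and every complex number $q$ with $0<|q|<1$, \[ \sum_{k=1}^{n}q^{2k}[8k+1]\frac{(q;q^2)_{k}^2(q;q^2)_{2k}}{(q^2;q^2)_{2k}(q^6;q^6)_{k}^2}\frac{(q^{3+6n},q^{-6n};q^6)_k}{(q^{3+6n},q^{-6n};q^2)_k}\sum_{i=1}^{k}\left\{\frac{q^{2i-1}}{[2i-1]^2}-\frac{q^{6i}}{[6i]^2}\right\} =\frac{(q^3;q^2)_{3n}(q^3;q^6)_{n}}{(q^2;q^2)_{3n}(q^6;q^6)_{n}}\sum_{j=1}^{2n}(-1)^{j-1}\frac{q^{3j}}{[3j]^2}. \]
   Context: For complex $x,q$ and an integer $n\ge 0$, $(x;q)_n=\prod_{i=0}^{n-1}(1-xq^i)$, and $(x_1,\dots,x_r;q)_n=(x_1;q)_n\cdots(x_r;q)_n$. The $q$-integer is $[n]=1+q+\cdots+q^{n-1}=(1-q^n)/(1-q)$. *)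

From HB Require Import structures.
From mathcomp Require Import all_boot all_order all_algebra.
From mathcomp Require Import reals.
From mathcomp.real_closed Require Import complex.
Set Implicit Arguments. Unset Strict Implicit. Unset Printing Implicit Defensive.
Import Order.TTheory GRing.Theory Num.Theory.
Local Open Scope ring_scope.

Definition qpoch (F : comRingType) (x q : F) (n : nat) : F :=
  \prod_(i < n) (1 - x * q ^+ i).

Definition qint (F : comRingType) (q : F) (n : nat) : F :=
  \sum_(i < n) q ^+ i.

From HB Require Import structures.
From mathcomp Require Import all_boot all_order all_algebra.
From mathcomp Require Import reals.
From mathcomp.real_closed Require Import complex.
From mathcomp Require Import ring zify.
Import Order.TTheory GRing.Theory Num.Theory.
Set Implicit Arguments. Unset Strict Implicit. Unset Printing Implicit Defensive.
Local Open Scope ring_scope.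

(* Divide the k-th summand, without its inner sum H_k, by the q-factorial prefactor of the
   right-hand side to get weights w(n,k).  Then sum_k w(n,k) = 1 and
   sum_k w(n,k) (H_k - J_n) = 0, where J_n is the alternating sum on the right, so
   sum_k w(n,k) H_k = J_n, which is the theorem.  Both identities follow by induction on n
   from creative telescoping, w(n+1,k) - w(n,k) = G(n,k+1) - G(n,k), where G(n,k) / w(n,k)
   is a rational function of q^(2n) and q^(2k).  The harmonic terms fit into the same
   scheme because q^m / [m]^2 = (1-q)^2 z / (1-z)^2 at z = q^m, so H_k and J_n also have
   rational increments; the certificate of the second identity is that of the first
   multiplied by such increments.  The assumption 0 < |q| < 1 is used only to know that
   q^a = q^b forces a = b, which keeps every denominator nonzero. *)

Section QPochhammer.
Variable F : comNzRingType.
Implicit Types (x y : F) (k m : nat).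

Lemma qpoch0 x y : qpoch x y 0 = 1.
Proof. by rewrite /qpoch big_ord0. Qed.

Lemma qpochS x y k : qpoch x y k.+1 = qpoch x y k * (1 - x * y ^+ k).
Proof. by rewrite /qpoch big_ord_recr. Qed.

Lemma qpochD x y m k : qpoch x y (m + k) = qpoch x y m * qpoch (x * y ^+ m) y k.
Proof.
by rewrite /qpoch big_split_ord; congr (_ * _); apply: eq_bigr => i _; rewrite -mulrA -exprD.
Qed.

End QPochhammer.

Section QPochhammerField.
Variable F : fieldType.
Implicit Types (x y : F) (k m : nat).

Lemma qpoch_neq0 x y k : (forall i, (i < k)%N -> 1 - x * y ^+ i != 0) -> qpoch x y k != 0.
Proof. by move=> h; apply/prodf_neq0 => i _; apply: h. Qed.

Lemma qpoch_shift x y m k : qpoch x y m != 0 ->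
  qpoch (x * y ^+ m) y k = qpoch x y k * qpoch (x * y ^+ k) y m / qpoch x y m.
Proof. by move=> hm; rewrite -qpochD addnC qpochD [qpoch x y m * _]mulrC mulfK. Qed.

Lemma qintE (q : F) m : 1 - q != 0 -> qint q m = (1 - q ^+ m) / (1 - q).
Proof.
move=> hq; apply: (canRL (mulfK hq)); rewrite /qint.
elim: m => [|m IH]; first by rewrite big_ord0 expr0 subrr mul0r.
by rewrite big_ord_recr /= mulrDl IH exprSr; ring.
Qed.

End QPochhammerField.

Lemma row_sums_telescope (V : zmodType) (F G Gs : nat -> nat -> V) :
  (forall n, G n 0 = 0) ->
  (forall n k, (k < n)%N -> G n k.+1 = Gs n k) ->
  (forall n k, (k <= n)%N -> F n.+1 k = F n k + (Gs n k - G n k)) ->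
  (forall n, F n.+1 n.+1 = - Gs n n) ->
  forall n, \sum_(0 <= k < n.+1) F n k = F 0 0.
Proof.
move=> G0 GS FS Fdiag; elim=> [|n IH]; first by rewrite big_nat1.
rewrite big_nat_recr //= Fdiag.
rewrite (eq_big_nat _ _ (F2 := fun k => F n k + (Gs n k - G n k))); last first.
  by move=> k /andP[_ hk]; rewrite FS.
rewrite big_split /= IH big_nat_recr //=.
rewrite (@telescope_sumr_eq _ 0 n (G n)) ?G0 //; last by move=> k /andP[_ hk]; rewrite GS.
by rewrite subr0 subrKC addrK.
Qed.

Section QSeries.
Variable R : realType.
Variable q : R[i].
Hypothesis q_gt0 : 0 < `|q|.
Hypothesis q_lt1 : `|q| < 1.

Lemma expq_inj a b : q ^+ a = q ^+ b -> a = b.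
Proof.
move=> /(congr1 Num.norm); rewrite !normrX => h.
by apply: (ieexprIn q_gt0 _ h); rewrite lt_eqF.
Qed.

Lemma q_neq0 : q != 0. Proof. by rewrite -normr_gt0. Qed.

Lemma expq_neq0 a : q ^+ a != 0. Proof. by rewrite expf_neq0 // q_neq0. Qed.

Lemma subr_expq_neq0 a b : a != b -> q ^+ a - q ^+ b != 0.
Proof. by move=> ab; rewrite subr_eq0; apply: contra ab => /eqP/expq_inj ->. Qed.

Lemma one_sub_expq_neq0 a : (0 < a)%N -> 1 - q ^+ a != 0.
Proof. by move=> a0; rewrite -(expr0 q) subr_expq_neq0 // eq_sym -lt0n. Qed.

Lemma expq_sub1_neq0 a : (0 < a)%N -> q ^+ a - 1 != 0.
Proof. by move=> a0; rewrite -(expr0 q) subr_expq_neq0 // -lt0n. Qed.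

Lemma one_subq_neq0 : 1 - q != 0. Proof. by rewrite -(expr1 q) one_sub_expq_neq0. Qed.

Lemma qpoch_expq_neq0 a b k : (0 < a)%N -> qpoch (q ^+ a) (q ^+ b) k != 0.
Proof.
move=> a_gt0; apply: qpoch_neq0 => i _.
by rewrite -exprM -exprD one_sub_expq_neq0 ?addn_gt0 ?a_gt0.
Qed.

Lemma qpoch_expqV_neq0 a b k : (0 < b)%N -> (b * k <= a)%N -> qpoch (q ^- a) (q ^+ b) k != 0.
Proof.
move=> b_gt0 bka; apply: qpoch_neq0 => i ik.
have -> : 1 - q ^- a * (q ^+ b) ^+ i = (q ^+ a - q ^+ (b * i)) / q ^+ a.
  by rewrite exprM; field; exact: expq_neq0.
by rewrite mulf_neq0 ?invr_eq0 ?expq_neq0 // subr_expq_neq0 //; nia.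
Qed.

(* After merging powers of [q], every factor of a [field] side condition is [q ^+ a],
   [1 - q ^+ a] or [q ^+ a - q ^+ b], where [a != b] is linear arithmetic on the indices. *)
Ltac qmerge := rewrite ?exprMn -?exprM;
  repeat (rewrite -exprD || rewrite -exprS || rewrite -exprSr).
Ltac qpow := qmerge; congr (_ ^+ _); lia.
Ltac qside := repeat (apply/andP; split);
  first [ assumption
        | qmerge; first [ exact: q_neq0 | exact: expq_neq0 | exact: one_subq_neq0
                        | apply: one_sub_expq_neq0; lia | apply: expq_sub1_neq0; lia
                        | apply: subr_expq_neq0; lia ] ].

Local Notation p := (q ^+ 2).

Lemma expq_double_succ k : q ^+ (2 * k.+1) = p * q ^+ (2 * k).
Proof. by qpow. Qed.

Definition kfactor k : R[i] :=
  q ^+ (2 * k) * qint q (8 * k + 1)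
  * (qpoch q p k ^+ 2 * qpoch q p (2 * k) / (qpoch p p (2 * k) * qpoch (q ^+ 6) (q ^+ 6) k ^+ 2)).

Definition nfactor n k : R[i] :=
  qpoch (q ^+ (3 + 6 * n)) (q ^+ 6) k * qpoch (q ^- (6 * n)) (q ^+ 6) k
  / (qpoch (q ^+ (3 + 6 * n)) p k * qpoch (q ^- (6 * n)) p k).

Definition summand n k : R[i] := kfactor k * nfactor n k.

Definition prefactor n : R[i] :=
  qpoch (q ^+ 3) p (3 * n) * qpoch (q ^+ 3) (q ^+ 6) n
  / (qpoch p p (3 * n) * qpoch (q ^+ 6) (q ^+ 6) n).

Definition weight n k : R[i] := summand n k / prefactor n.

Definition hsum k : R[i] :=
  \sum_(1 <= i < k.+1)
    (q ^+ (2 * i - 1) / qint q (2 * i - 1) ^+ 2 - q ^+ (6 * i) / qint q (6 * i) ^+ 2).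

Definition jsum n : R[i] :=
  \sum_(1 <= j < (2 * n).+1) (-1) ^+ (j - 1) * (q ^+ (3 * j) / qint q (3 * j) ^+ 2).

Definition qlam (z : R[i]) : R[i] := (1 - q) ^+ 2 * z / (1 - z) ^+ 2.

Lemma expq_div_qint2 m : (0 < m)%N -> q ^+ m / qint q m ^+ 2 = qlam (q ^+ m).
Proof. by move=> m_gt0; rewrite qintE ?one_subq_neq0 // /qlam; field; qside. Qed.

Lemma hsumS k :
  hsum k.+1 = hsum k + qlam (q * q ^+ (2 * k)) - qlam (q ^+ 6 * q ^+ (2 * k) ^+ 3).
Proof.
rewrite /hsum big_nat_recr //= (@expq_div_qint2 (2 * k.+1 - 1)) ?(@expq_div_qint2 (6 * k.+1));
  try lia.
by rewrite addrA; congr (_ + qlam _ - qlam _); qpow.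
Qed.

Lemma jsumS n :
  jsum n.+1 = jsum n + qlam (q ^+ 3 * q ^+ (2 * n) ^+ 3) - qlam (q ^+ 6 * q ^+ (2 * n) ^+ 3).
Proof.
rewrite /jsum (_ : (2 * n.+1).+1 = (2 * n).+3)%N; last by lia.
rewrite big_nat_recr // big_nat_recr //= !subSS !subn0 (@expq_div_qint2 (3 * (2 * n).+1))
  ?(@expq_div_qint2 (3 * (2 * n).+2)); try lia.
rewrite exprS exprM sqrrN !expr1n mulr1 !mul1r mulN1r.
by congr (_ + qlam _ - qlam _); qpow.
Qed.

(* The rational functions below are evaluated at N = q^(2n) and K = q^(2k). *)
Definition ratio_k (N K : R[i]) : R[i] :=
  let x := q ^+ 3 * N ^+ 3 in let y := (N ^+ 3)^-1 in
  p * (1 - q * p ^+ 4 * K ^+ 4) * (1 - q * K) ^+ 2 * (1 - q * K ^+ 2) * (1 - q * p * K ^+ 2)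
  * (1 - x * K ^+ 3) * (1 - y * K ^+ 3)
  / ((1 - q * K ^+ 4) * (1 - p * K ^+ 2) * (1 - p ^+ 2 * K ^+ 2) * (1 - p ^+ 3 * K ^+ 3) ^+ 2
     * (1 - x * K) * (1 - y * K)).

Definition nfactor_ratio (N K : R[i]) : R[i] :=
  let x := q ^+ 3 * N ^+ 3 in let y := (q ^+ 6 * N ^+ 3)^-1 in
  (1 - x * K ^+ 3) * (1 - x * p) * (1 - x * p ^+ 2)
  * (1 - y * K) * (1 - y * p * K) * (1 - y * p ^+ 2 * K)
  / ((1 - x * K) * (1 - x * p * K) * (1 - x * p ^+ 2 * K)
     * (1 - y * K ^+ 3) * (1 - y * p) * (1 - y * p ^+ 2)).

Definition prefactor_ratio (N : R[i]) : R[i] :=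
  let x := q ^+ 3 * N ^+ 3 in
  (1 - x) ^+ 2 * (1 - x * p) * (1 - x * p ^+ 2)
  / ((1 - p * N ^+ 3) * (1 - p ^+ 2 * N ^+ 3) * (1 - p ^+ 3 * N ^+ 3) * (1 - q ^+ 6 * N ^+ 3)).

Definition ratio_n (N K : R[i]) : R[i] := nfactor_ratio N K / prefactor_ratio N.

(* With G(n,k) := cert N K * weight n k one has G(n,k+1) = cert_succ N K * weight n k, and
   [ratio_n_cert] is the telescoping relation weight (n+1) k - weight n k = G(n,k+1) - G(n,k). *)
Definition cert_coef (N : R[i]) : R[i] :=
  - p * N ^+ 3 * (1 - q ^+ 9 * N ^+ 6) / (1 - q ^+ 3 * N ^+ 3) ^+ 2.

Definition cert_succ (N K : R[i]) : R[i] :=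
  let x := q ^+ 3 * N ^+ 3 in
  cert_coef N * (1 - q * K) ^+ 2 * (1 - q * K ^+ 2) * (1 - p * q * K ^+ 2) * (1 - x * K ^+ 3)
  / (K * (1 - x * p * K) * (1 - x * p ^+ 2 * K) * (1 - q * K ^+ 4) * (1 - x * K)).

Definition cert (N K : R[i]) : R[i] :=
  let x := q ^+ 3 * N ^+ 3 in let y := (N ^+ 3)^-1 in
  cert_coef N * (1 - K ^+ 2 / p) * (1 - K ^+ 2) * (1 - y * K / p) * (1 - K ^+ 3) ^+ 2
  / (K * (1 - y * K ^+ 3 / p ^+ 3) * (1 - x * K) * (1 - p * x * K) * (1 - q * K ^+ 4)).

Lemma cert1 N : cert N 1 = 0.
Proof. by rewrite /cert !expr1n subrr !(mulr0, mul0r). Qed.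

Lemma ratio_n_cert n k : (k <= n)%N ->
  ratio_n (q ^+ (2 * n)) (q ^+ (2 * k))
  = 1 + cert_succ (q ^+ (2 * n)) (q ^+ (2 * k)) - cert (q ^+ (2 * n)) (q ^+ (2 * k)).
Proof.
move=> kn; rewrite /ratio_n /nfactor_ratio /prefactor_ratio /cert_succ /cert /cert_coef.
field. qside.
Qed.

Lemma ratio_n_qlam_cert n k : (k <= n)%N ->
  ratio_n (q ^+ (2 * n)) (q ^+ (2 * k)) * qlam (q ^+ 6 * q ^+ (2 * n) ^+ 3)
  = qlam (q ^+ 3 * q ^+ (2 * n) ^+ 3)
    + cert_succ (q ^+ (2 * n)) (q ^+ (2 * k)) * qlam (q * q ^+ (2 * k))
    - cert (q ^+ (2 * n)) (q ^+ (2 * k)) * qlam (q ^+ (2 * k) ^+ 3).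
Proof.
move=> kn; rewrite /ratio_n /nfactor_ratio /prefactor_ratio /qlam.
(* At k = 0, qlam (K ^+ 3) is the junk value qlam 1 (a division by zero); it is harmless
   because cert N 1 = 0. *)
have [-> | k_gt0] := posnP k.
  rewrite muln0 expr0 expr1n cert1 mul0r subr0 /cert_succ /cert_coef.
  field. qside.
rewrite /cert_succ /cert /cert_coef; field. qside.
Qed.

Lemma cert_shift n k : (k < n)%N ->
  cert (q ^+ (2 * n)) (p * q ^+ (2 * k)) * ratio_k (q ^+ (2 * n)) (q ^+ (2 * k))
  = cert_succ (q ^+ (2 * n)) (q ^+ (2 * k)).
Proof. move=> kn; rewrite /ratio_k /cert_succ /cert /cert_coef; field. qside. Qed.

Lemma ratio_diag n :
  ratio_n (q ^+ (2 * n)) (q ^+ (2 * n)) * ratio_k (p * q ^+ (2 * n)) (q ^+ (2 * n))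
  = - cert_succ (q ^+ (2 * n)) (q ^+ (2 * n)).
Proof.
rewrite /ratio_n /nfactor_ratio /prefactor_ratio /ratio_k /cert_succ /cert_coef.
field. qside.
Qed.

Lemma prefactor_neq0 n : prefactor n != 0.
Proof. by rewrite /prefactor !(mulf_neq0, invr_neq0) ?qpoch_expq_neq0. Qed.

Lemma summand_ratio_k n k : (k < n)%N ->
  summand n k.+1 = summand n k * ratio_k (q ^+ (2 * n)) (q ^+ (2 * k)).
Proof.
move=> kn.
have P3 : qpoch p p (2 * k) != 0 by apply: qpoch_expq_neq0.
have P4 : qpoch (q ^+ 6) (q ^+ 6) k != 0 by apply: qpoch_expq_neq0.
have P7 : qpoch (q ^+ (3 + 6 * n)) p k != 0 by apply: qpoch_expq_neq0; lia.
have P8 : qpoch (q ^- (6 * n)) p k != 0 by apply: qpoch_expqV_neq0; lia.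
rewrite /summand /kfactor /nfactor /ratio_k (_ : 2 * k.+1 = (2 * k).+2)%N; last by lia.
rewrite (_ : 8 * k.+1 + 1 = 8 * k + 1 + 8)%N; last by lia.
rewrite !qpochS !qintE ?one_subq_neq0 //.
have -> : q ^+ (2 * k).+2 = p * q ^+ (2 * k) by qpow.
have -> : q ^+ (8 * k + 1 + 8) = q * p ^+ 4 * (q ^+ (2 * k)) ^+ 4 by qpow.
have -> : q ^+ (8 * k + 1) = q * (q ^+ (2 * k)) ^+ 4 by qpow.
have -> : p ^+ k = q ^+ (2 * k) by qpow.
have -> : p ^+ (2 * k) = (q ^+ (2 * k)) ^+ 2 by qpow.
have -> : p ^+ (2 * k).+1 = p * (q ^+ (2 * k)) ^+ 2 by qpow.
have -> : (q ^+ 6) ^+ k = (q ^+ (2 * k)) ^+ 3 by qpow.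
have x_n : q ^+ (3 + 6 * n) = q ^+ 3 * (q ^+ (2 * n)) ^+ 3 by qpow.
have y_n : q ^- (6 * n) = ((q ^+ (2 * n)) ^+ 3)^-1 by congr (_^-1); qpow.
rewrite x_n y_n in P7 P8 *; clear x_n y_n.
field. qside.
Qed.

Lemma weight_ratio_k n k : (k < n)%N ->
  weight n k.+1 = weight n k * ratio_k (q ^+ (2 * n)) (q ^+ (2 * k)).
Proof. by move=> kn; rewrite /weight summand_ratio_k // mulrAC. Qed.

Lemma nfactor_ratio_n n k : (k <= n)%N ->
  nfactor n.+1 k = nfactor n k * nfactor_ratio (q ^+ (2 * n)) (q ^+ (2 * k)).
Proof.
move=> kn.
have P7 : qpoch (q ^+ (3 + 6 * n)) p k != 0 by apply: qpoch_expq_neq0; lia.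
have P8 : qpoch (q ^- (6 * n.+1)) p k != 0 by apply: qpoch_expqV_neq0; lia.
have x6 : qpoch (q ^+ (3 + 6 * n.+1)) (q ^+ 6) k
    = qpoch (q ^+ (3 + 6 * n)) (q ^+ 6) k * qpoch (q ^+ (3 + 6 * n) * (q ^+ 6) ^+ k) (q ^+ 6) 1
      / qpoch (q ^+ (3 + 6 * n)) (q ^+ 6) 1.
  by rewrite -qpoch_shift; [congr qpoch; qpow | apply: qpoch_expq_neq0].
have x2 : qpoch (q ^+ (3 + 6 * n.+1)) p k
    = qpoch (q ^+ (3 + 6 * n)) p k * qpoch (q ^+ (3 + 6 * n) * p ^+ k) p 3
      / qpoch (q ^+ (3 + 6 * n)) p 3.
  by rewrite -qpoch_shift; [congr qpoch; qpow | apply: qpoch_expq_neq0].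
have y6 : qpoch (q ^- (6 * n)) (q ^+ 6) k
    = qpoch (q ^- (6 * n.+1)) (q ^+ 6) k * qpoch (q ^- (6 * n.+1) * (q ^+ 6) ^+ k) (q ^+ 6) 1
      / qpoch (q ^- (6 * n.+1)) (q ^+ 6) 1.
  rewrite -qpoch_shift; last by apply: qpoch_expqV_neq0; lia.
  by rewrite expr1 mulnSr exprD invfM mulfVK ?expq_neq0.
have y2 : qpoch (q ^- (6 * n)) p k
    = qpoch (q ^- (6 * n.+1)) p k * qpoch (q ^- (6 * n.+1) * p ^+ k) p 3
      / qpoch (q ^- (6 * n.+1)) p 3.
  rewrite -qpoch_shift; last by apply: qpoch_expqV_neq0; lia.
  by rewrite -exprM mulnSr exprD invfM mulfVK ?expq_neq0.
rewrite /nfactor {}x6 {}x2 {}y6 {}y2 !qpochS !qpoch0.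
have -> : (q ^+ 6) ^+ k = (q ^+ (2 * k)) ^+ 3 by qpow.
have -> : p ^+ k = q ^+ (2 * k) by qpow.
have x_n : q ^+ (3 + 6 * n) = q ^+ 3 * (q ^+ (2 * n)) ^+ 3 by qpow.
have y_n : q ^- (6 * n.+1) = (q ^+ 6 * (q ^+ (2 * n)) ^+ 3)^-1 by congr (_^-1); qpow.
rewrite x_n y_n in P7 P8 *; clear x_n y_n.
rewrite /nfactor_ratio; field. qside.
Qed.

Lemma prefactor_ratio_n n : prefactor n.+1 = prefactor n * prefactor_ratio (q ^+ (2 * n)).
Proof.
have C1 : qpoch (q ^+ 3) p (3 * n) != 0 by apply: qpoch_expq_neq0.
have C2 : qpoch (q ^+ 3) (q ^+ 6) n != 0 by apply: qpoch_expq_neq0.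
have C3 : qpoch p p (3 * n) != 0 by apply: qpoch_expq_neq0.
have C4 : qpoch (q ^+ 6) (q ^+ 6) n != 0 by apply: qpoch_expq_neq0.
rewrite /prefactor /prefactor_ratio (_ : 3 * n.+1 = (3 * n).+3)%N; last by lia.
rewrite !qpochS.
have -> : p ^+ (3 * n) = (q ^+ (2 * n)) ^+ 3 by qpow.
have -> : p ^+ (3 * n).+1 = p * (q ^+ (2 * n)) ^+ 3 by qpow.
have -> : p ^+ (3 * n).+2 = q ^+ 4 * (q ^+ (2 * n)) ^+ 3 by qpow.
have -> : (q ^+ 6) ^+ n = (q ^+ (2 * n)) ^+ 3 by qpow.
field. qside.
Qed.

Lemma weight_ratio_n n k : (k <= n)%N ->
  weight n.+1 k = weight n k * ratio_n (q ^+ (2 * n)) (q ^+ (2 * k)).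
Proof.
move=> kn; rewrite /weight /summand /ratio_n nfactor_ratio_n // prefactor_ratio_n.
by rewrite !invfM; ring.
Qed.

Lemma weight00 : weight 0 0 = 1.
Proof.
rewrite /weight /summand /kfactor /nfactor /prefactor !muln0 !addn0 !qpoch0 /qint big_ord1.
by rewrite !(expr0, mulr1, mul1r, invr1, expr1n).
Qed.

Lemma weight_diag n : weight n.+1 n.+1 = - cert_succ (q ^+ (2 * n)) (q ^+ (2 * n)) * weight n n.
Proof.
rewrite weight_ratio_k // weight_ratio_n // -mulrA expq_double_succ ratio_diag.
by rewrite mulrC.
Qed.

Lemma sum_weight n : \sum_(0 <= k < n.+1) weight n k = 1.
Proof.
pose Gs n k := cert_succ (q ^+ (2 * n)) (q ^+ (2 * k)) * weight n k.
pose G n k := cert (q ^+ (2 * n)) (q ^+ (2 * k)) * weight n k.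
rewrite (row_sums_telescope (F := weight) (G := G) (Gs := Gs)) ?weight00 //.
- by move=> m; rewrite /G muln0 expr0 cert1 mul0r.
- move=> m k km.
  by rewrite /G /Gs weight_ratio_k // expq_double_succ mulrCA cert_shift // mulrC.
- by move=> m k km; rewrite /G /Gs weight_ratio_n // ratio_n_cert //; ring.
- by move=> m; rewrite weight_diag /Gs mulNr.
Qed.

Lemma sum_weight_harmonic n : \sum_(0 <= k < n.+1) weight n k * (hsum k - jsum n) = 0.
Proof.
pose x n := q ^+ 3 * q ^+ (2 * n) ^+ 3.
pose Gs n k := cert_succ (q ^+ (2 * n)) (q ^+ (2 * k)) * weight n k
              * (hsum k - jsum n + qlam (q * q ^+ (2 * k)) - qlam (x n)).
pose G n k := cert (q ^+ (2 * n)) (q ^+ (2 * k)) * weight n k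
              * (hsum k - jsum n + qlam (q ^+ (2 * k) ^+ 3) - qlam (x n)).
rewrite (row_sums_telescope (F := fun n k => weight n k * (hsum k - jsum n)) (G := G) (Gs := Gs)).
- by rewrite /hsum /jsum !big_geq // subrr mulr0.
- by move=> m; rewrite /G muln0 expr0 cert1 !mul0r.
- move=> m k km; rewrite /G /Gs weight_ratio_k // hsumS expq_double_succ.
  have -> : (p * q ^+ (2 * k)) ^+ 3 = q ^+ 6 * q ^+ (2 * k) ^+ 3 by qpow.
  by rewrite -(cert_shift km); ring.
- move=> m k km; rewrite /G /Gs weight_ratio_n // jsumS.
  transitivity (weight m k * (ratio_n (q ^+ (2 * m)) (q ^+ (2 * k)) * (hsum k - jsum m - qlam (x m))
    + ratio_n (q ^+ (2 * m)) (q ^+ (2 * k)) * qlam (q ^+ 6 * q ^+ (2 * m) ^+ 3))).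
    by rewrite /x; ring.
  by rewrite ratio_n_qlam_cert // ratio_n_cert // /x; ring.
- by move=> m; rewrite weight_diag hsumS jsumS /Gs; ring.
Qed.

Lemma sum_summand_hsum n :
  \sum_(0 <= k < n.+1) summand n k * hsum k = prefactor n * jsum n.
Proof.
have summandE k : summand n k = prefactor n * weight n k.
  by rewrite /weight mulrC divfK ?prefactor_neq0.
under eq_bigr do rewrite summandE -mulrA.
rewrite -mulr_sumr; congr (_ * _).
transitivity (\sum_(0 <= k < n.+1) weight n k * (hsum k - jsum n)
              + (\sum_(0 <= k < n.+1) weight n k) * jsum n).
  by rewrite mulr_suml -big_split; apply: eq_bigr => k _ /=; ring.
by rewrite sum_weight_harmonic sum_weight add0r mul1r.
Qed.

End QSeries.

Local Open Scope complex_scope.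

Theorem mainTheorem11 (R : realType) (n : nat) (q : R[i]) :
  (0 < n)%N -> 0 < `|q| -> `|q| < 1 ->
  \sum_(1 <= k < n.+1)
     q ^+ (2 * k) * qint q (8 * k + 1)
     * (qpoch q (q ^+ 2) k ^+ 2 * qpoch q (q ^+ 2) (2 * k)
        / (qpoch (q ^+ 2) (q ^+ 2) (2 * k) * qpoch (q ^+ 6) (q ^+ 6) k ^+ 2))
     * (qpoch (q ^+ (3 + 6 * n)) (q ^+ 6) k * qpoch (q ^- (6 * n)) (q ^+ 6) k
        / (qpoch (q ^+ (3 + 6 * n)) (q ^+ 2) k * qpoch (q ^- (6 * n)) (q ^+ 2) k))
     * \sum_(1 <= i < k.+1)
         (q ^+ (2 * i - 1) / qint q (2 * i - 1) ^+ 2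
          - q ^+ (6 * i) / qint q (6 * i) ^+ 2)
  = qpoch (q ^+ 3) (q ^+ 2) (3 * n) * qpoch (q ^+ 3) (q ^+ 6) n
      / (qpoch (q ^+ 2) (q ^+ 2) (3 * n) * qpoch (q ^+ 6) (q ^+ 6) n)
    * \sum_(1 <= j < (2 * n).+1)
        (-1) ^+ (j - 1) * (q ^+ (3 * j) / qint q (3 * j) ^+ 2).
Proof.
(* The identity holds for n = 0 as well. *)
move=> _ q_gt0 q_lt1.
change (\sum_(1 <= k < n.+1) summand q n k * hsum q k = prefactor q n * jsum q n).
have hsum0 : hsum q 0 = 0 by rewrite /hsum big_geq.
by rewrite -(sum_summand_hsum q_gt0 q_lt1) [RHS]big_ltn // hsum0 mulr0 add0r.
Qed.
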